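(* Let $n\ge1$, $f\in A_{\vec 0}(\mathbb{D}^n)$ and $\alpha\in\mathbb{C}\setminus\{0\}$. Then no non-zero positive measure $\mu\in A_{\vec 0}(\mathbb{D}^n)^\perp$ has support contained in the level set $\{z\in\mathbb{T}^n: f(z)=\alpha\}$.
   Context: $A(\mathbb{D}^n)$ is the polydisc algebra (continuous on $\overline{\mathbb{D}}^n$, holomorphic on $\mathbb{D}^n$), regarded as a subspace of $C(\mathbb{T}^n)$. $A_{\vec 0}(\mathbb{D}^n)=\{z_1\cdots z_n f(z): f\in A(\mathbb{D}^n)\}$. $A_{\vec 0}(\mathbb{D}^n)^\perp$ is the set of complex Borel measures $\mu$ of bounded variation on $\mathbb{T}^n$ with $\int_{\mathbb{T}^n} g\,d\mu=0$ for all $g\in A_{\vec 0}(\mathbb{D}^n)$. *)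

(* mathcomp-analysis over an abstract R : realType,
   complex numbers are R[i] (mathcomp-real-closed), viewed as the normed
   space (R[i])^o over itself (so `derivable` = complex differentiability). *)
From HB Require Import structures.
From mathcomp Require Import all_boot all_order all_algebra.
From mathcomp Require Import complex.
From mathcomp Require Import all_classical all_reals all_analysis.
Set Implicit Arguments.
Unset Strict Implicit.
Unset Printing Implicit Defensive.
Import Order.TTheory GRing.Theory Num.Theory.
Import numFieldNormedType.Exports.
Local Open Scope ring_scope.
Local Open Scope classical_set_scope.

Notation CC R := ((R[i])^o).

(* Points of C^n are row vectors; z ord0 j is the j-th coordinate. *)
Definition torus (R : realType) (n : nat) : set 'rV[CC R]_n :=
  [set z | forall j : 'I_n, `|z ord0 j| = 1].
Definition closed_polydisc (R : realType) (n : nat) : set 'rV[CC R]_n :=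
  [set z | forall j : 'I_n, `|z ord0 j| <= 1].
Definition open_polydisc (R : realType) (n : nat) : set 'rV[CC R]_n :=
  [set z | forall j : 'I_n, `|z ord0 j| < 1].
Arguments torus : clear implicits.
Arguments closed_polydisc : clear implicits.
Arguments open_polydisc : clear implicits.

Definition upd (R : realType) (n : nat) (z : 'rV[CC R]_n) (j : 'I_n)
  (w : CC R) : 'rV[CC R]_n :=
  \row_(k < n) (if k == j then w else z ord0 k).

(* g in A(D^n): continuous on the closed polydisc and holomorphic on the
   open polydisc (holomorphic = complex differentiable in each variable
   separately; with continuity this is the usual notion, by Osgood). *)
Definition in_polydisc_alg (R : realType) (n : nat)
  (g : 'rV[CC R]_n -> CC R) : Prop :=
  {within closed_polydisc R n, continuous g} /\
  (forall z, open_polydisc R n z -> forall j : 'I_n,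
     derivable (fun w : CC R => g (upd z j w)) (z ord0 j) 1).

(* f in A_0(D^n), regarded as a function on T^n: f = z_1...z_n g on T^n
   for some g in A(D^n). *)
Definition in_polydisc_alg0 (R : realType) (n : nat)
  (f : 'rV[CC R]_n -> CC R) : Prop :=
  exists g, in_polydisc_alg g /\
    forall z, torus R n z -> f z = (\prod_(j < n) z ord0 j) * g z.

Notation borelCn R n := (g_sigma_algebraType (@open 'rV[CC R]_n)).

Definition cintegral (R : realType) (n : nat)
  (mu : {measure set (borelCn R n) -> \bar R})
  (D : set (borelCn R n)) (h : 'rV[CC R]_n -> CC R) : CC R :=
  ((\int[mu]_(x in D) complex.Re (h x))%:C + 'i * (\int[mu]_(x in D) complex.Im (h x))%:C)%C.

Definition msupport (R : realType) (n : nat)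
  (mu : {measure set (borelCn R n) -> \bar R}) : set 'rV[CC R]_n :=
  [set x | forall U : set 'rV[CC R]_n, open U -> U x -> (0 < mu U)%E].

Definition annihilates_A0 (R : realType) (n : nat)
  (mu : {measure set (borelCn R n) -> \bar R}) : Prop :=
  forall g, in_polydisc_alg0 g -> cintegral mu (torus R n) g = 0.

From HB Require Import structures.
From mathcomp Require Import all_boot all_order all_algebra.
From mathcomp Require Import complex.
From mathcomp Require Import all_classical all_reals all_analysis.
From mathcomp Require Import measurable_realfun.
From mathcomp Require Import lra.
Set Implicit Arguments.
Unset Strict Implicit.
Unset Printing Implicit Defensive.
Import Order.TTheory GRing.Theory Num.Theory.
Import numFieldNormedType.Exports.
Local Open Scope ring_scope.
Local Open Scope classical_set_scope.

(* Let mu be such a finite measure and K its closed support.  Since C^n is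
   second countable, the open set ~` K is a countable union of mu-null
   rational balls, so mu is carried by K, hence by T^n.  The function f is
   continuous on T^n, hence Borel measurable there, and f = alpha on K;
   therefore its integral against mu equals alpha * mu(T^n).  But f itself
   lies in A_0(D^n), so the integral vanishes, and alpha <> 0 forces
   mu(T^n) = 0, i.e. mu = 0. *)

Section ComplexProjections.
Variable R : realType.

Lemma lipschitz1_continuous (p : CC R -> R) :
  (forall x y : CC R, (`|p x - p y|%:C <= `|x - y|)%C) -> continuous p.
Proof.
move=> lip x A /= /nbhs_ballP [e e0 hA].
apply/nbhs_ballP; exists e%:C%C; first by rewrite /= ltcR.
move=> y; rewrite -ball_normE /= => hy; apply: hA.
by rewrite -ball_normE /= -ltcR; exact: le_lt_trans (lip x y) hy.
Qed.

Lemma normc_ge_Im (z : R[i]) : (`|complex.Im z|%:C <= `|z|)%C.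
Proof.
rewrite normc_def lecR -sqrtr_sqr; apply: ler_wsqrtr.
by rewrite lerDr sqr_ge0.
Qed.

Lemma Re_continuous : continuous (fun z : CC R => complex.Re z).
Proof.
by apply: lipschitz1_continuous => x y; rewrite -raddfB; exact: normc_ge_Re.
Qed.

Lemma Im_continuous : continuous (fun z : CC R => complex.Im z).
Proof.
by apply: lipschitz1_continuous => x y; rewrite -raddfB; exact: normc_ge_Im.
Qed.

End ComplexProjections.

Section BorelCn.
Variables (R : realType) (n : nat).
Local Notation X := (borelCn R n).

Lemma open_measurableCn (A : set X) :
  open (A : set 'rV[CC R]_n) -> measurable A.
Proof. by move=> oA; apply: sub_sigma_algebra. Qed.

Lemma closed_measurableCn (A : set X) :
  closed (A : set 'rV[CC R]_n) -> measurable A.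
Proof.
move=> cA; rewrite -[A]setCK; apply: measurableC; apply: open_measurableCn.
exact: closed_openC.
Qed.

Lemma torus_closed : closed (torus R n).
Proof.
have -> : torus R n =
    \bigcap_(j in setT) ((fun z : 'rV[CC R]_n => `|z ord0 j|) @^-1` [set 1]).
  by apply/seteqP; split => z /= Tz j; [move=> _ |]; apply: Tz.
apply: closed_bigI => j _; apply: preimage_closed; last first.
  exact/accessible_closed_set1/hausdorff_accessible/norm_hausdorff.
move=> z _; apply: continuous_comp; first exact: coord_continuous.
exact: norm_continuous.
Qed.

Lemma measurable_torus : measurable (torus R n : set X).
Proof. exact: closed_measurableCn torus_closed. Qed.

Lemma continuous_measurable_fun (D : set X) (h : 'rV[CC R]_n -> R) :
  measurable D -> {within (D : set 'rV[CC R]_n), continuous h} ->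
  measurable_fun D (h : X -> R).
Proof.
move=> mD /continuousP ch.
apply: (measurability _ (RGenOpens.measurableE R)) => _ [_ [a [b ->] <-]].
have /open_subspaceP [V oV VD] :=
  ch `]a, b[%classic (@interval_open R (BRight a) (BLeft b) erefl erefl).
by rewrite setIC -VD; apply: measurableI => //; exact: open_measurableCn.
Qed.

Lemma coord_prod_continuous (s : seq 'I_n) :
  continuous (fun z : 'rV[CC R]_n => \prod_(j <- s) z ord0 j).
Proof.
elim: s => [|j s IH] z.
  by under eq_fun do rewrite big_nil; exact: cst_continuous.
under eq_fun do rewrite big_cons.
apply: continuousM; last exact: IH.
exact: (@coord_continuous (R[i]^o) 1 n ord0 j z).
Qed.

Lemma A0_continuous_on_torus (g : 'rV[CC R]_n -> CC R) :
  {within closed_polydisc R n, continuous g} ->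
  {within torus R n, continuous (fun z => (\prod_(j < n) z ord0 j) * g z)}.
Proof.
move=> gc; apply: (@continuous_subspaceW _ _ _ (closed_polydisc R n)).
  by move=> z Tz j; rewrite Tz.
apply/subspace_continuousP => x Dx.
have gx := (iffLR (subspace_continuousP _ _) gc) x Dx.
apply: cvgM gx; apply: cvg_within_filter; exact: coord_prod_continuous.
Qed.

Lemma A0_measurable_fun (f : 'rV[CC R]_n -> CC R) (p : CC R -> R) :
  continuous p -> in_polydisc_alg0 f ->
  measurable_fun (torus R n : set X) (fun z => p (f z)).
Proof.
move=> pc [g [[gc _] fE]].
apply: (@eq_measurable_fun _ _ _ _ _
  (fun z : X => p ((\prod_(j < n) z ord0 j) * g z))).
  by move=> z; rewrite inE => Tz; rewrite fE.
apply: continuous_measurable_fun; first exact: measurable_torus.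
apply/subspace_continuousP => x Tx.
have fx := (iffLR (subspace_continuousP _ _) (A0_continuous_on_torus gc)) x Tx.
exact: cvg_comp fx (pc _).
Qed.

End BorelCn.

Section RationalPoints.
Variables (R : realType) (n : nat).

Definition rat_point (q : 'rV[rat * rat]_n) : 'rV[CC R]_n :=
  \row_j ((ratr (q ord0 j).1 +i* ratr (q ord0 j).2)%C : CC R).

Lemma normc_lt_parts (z : R[i]) (d : R) :
  `|complex.Re z| < d -> `|complex.Im z| < d -> (`|z| < (d *+ 2)%:C)%C.
Proof.
move=> hr hi; rewrite normc_def ltcR.
have d0 : 0 < d by exact: le_lt_trans (normr_ge0 _) hr.
rewrite -[X in _ < X]ger0_norm ?pmulrn_lge0 ?ltW // -sqrtr_sqr.
rewrite ltr_sqrt; last first.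
  by rewrite exprn_gt0 // pmulrn_lgt0.
move: hr hi; rewrite !ltr_norml => /andP[h1 h2] /andP[h3 h4].
rewrite mulr2n; nra.
Qed.

Lemma ball_coordP (x y : 'rV[CC R]_n) (e : R) : 0 < e ->
  (forall j, `|x ord0 j - y ord0 j| < e%:C)%C -> ball x e%:C%C y.
Proof.
move=> e0 xy; split; first by rewrite ltcR.
by move=> i j; rewrite ord1 -ball_normE /=; exact: xy.
Qed.

Lemma rat_point_dense (x : 'rV[CC R]_n) (e : R) : 0 < e ->
  exists q, forall j, (`|x ord0 j - rat_point q ord0 j| < e%:C)%C.
Proof.
move=> e0; have e2 : 0 < e / 2 by rewrite divr_gt0.
suff /choice [q hq] : forall j : 'I_n, exists q : rat * rat,
    `|complex.Re (x ord0 j) - ratr q.1| < e / 2 /\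
    `|complex.Im (x ord0 j) - ratr q.2| < e / 2.
  exists (\row_j q j) => j; rewrite [e in (e%:C)%C]splitr -mulr2n.
  by rewrite /rat_point !mxE; apply: normc_lt_parts; rewrite raddfB; apply hq.
move=> j.
have [a] := @rat_in_itvoo R (complex.Re (x ord0 j) - e / 2)
  (complex.Re (x ord0 j) + e / 2) ltac:(lra).
have [b] := @rat_in_itvoo R (complex.Im (x ord0 j) - e / 2)
  (complex.Im (x ord0 j) + e / 2) ltac:(lra).
rewrite !in_itv /= => /andP[b1 b2] /andP[a1 a2].
by exists (a, b); rewrite !ltr_distl; split; apply/andP; split; lra.
Qed.

Lemma rational_ball_inside (U : set 'rV[CC R]_n) (x : 'rV[CC R]_n) :
  open U -> U x -> exists qr : 'rV[rat * rat]_n * rat,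
    ball (rat_point qr.1) (ratr qr.2)%:C%C x /\
    ball (rat_point qr.1) (ratr qr.2)%:C%C `<=` U.
Proof.
move=> oU Ux; have /nbhs_ballP [[e ei] /=] : nbhs x U by exact: open_nbhs_nbhs.
rewrite ltcE /= => /andP[/eqP ei0 e0]; subst ei => xeU.
have [q hq] := @rat_point_dense x (e / 3) ltac:(lra).
have [r] := @rat_in_itvoo R (e / 3) (e / 2) ltac:(lra).
rewrite in_itv /= => /andP[r1 r2].
have xq : ball x (e / 3)%:C%C (rat_point q) by apply: ball_coordP => //; lra.
exists (q, r); split.
  apply: ball_coordP => [|j]; first lra.
  by rewrite distrC; apply: lt_trans (hq j) _; rewrite ltcR.
move=> y /(ball_triangle xq) xy; apply: xeU; apply: le_ball xy.
by rewrite -rmorphD lecR; lra.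
Qed.

End RationalPoints.

Section Support.
Variables (R : realType) (n : nat) (mu : {measure set (borelCn R n) -> \bar R}).
Local Notation X := (borelCn R n).

Lemma not_msupport_null_nbhs (x : X) : ~ msupport mu x ->
  exists U : set X, [/\ open (U : set 'rV[CC R]_n), U x & mu U = 0%E].
Proof.
move=> nKx; apply: contrapT => noU; apply: nKx => U oU Ux.
rewrite lt0e measure_ge0 andbT; apply/eqP => mU0.
by apply: noU; exists U.
Qed.

Lemma open_msupportC : open (~` msupport mu : set 'rV[CC R]_n).
Proof.
rewrite openE => x /not_msupport_null_nbhs [U [oU Ux mU0]].
apply: (@filterS _ _ _ U); last exact: open_nbhs_nbhs.
by move=> y Uy /(_ U oU Uy); rewrite mU0 ltxx.
Qed.

Lemma measurable_msupport : measurable (msupport mu : set X).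
Proof.
rewrite -[msupport mu]setCK; apply: measurableC.
exact: open_measurableCn open_msupportC.
Qed.

(* The complement of the support is null: it is covered by the countably
   many rational balls contained in some open null set. *)
Lemma msupportC_null : mu (~` msupport mu) = 0%E.
Proof.
pose I := ('rV[rat * rat]_n * rat)%type.
pose B (i : I) : set X := ball (rat_point R i.1) (ratr i.2)%:C%C.
pose null_ball (i : I) := exists U : set X,
  [/\ open (U : set 'rV[CC R]_n), mu U = 0%E & B i `<=` U].
pose F (k : nat) : set X := if @unpickle I k is Some i then
  if pselect (null_ball i) then B i else set0 else set0.
have mB i : measurable (B i) by apply: open_measurableCn; exact: ball_open.
have mF k : measurable (F k).
  rewrite /F; case: unpickle => [i|]; last exact: measurable0.
  by case: pselect => ?; [exact: mB | exact: measurable0].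
have F0 k : mu (F k) = 0%E.
  rewrite /F; case: unpickle => [i|]; last exact: measure0.
  case: pselect => [[U [oU mU0 BU]]|?]; last exact: measure0.
  exact: (subset_measure0 (mB i) (open_measurableCn oU) BU mU0).
have cover : ~` msupport mu `<=` \bigcup_k F k.
  move=> x /not_msupport_null_nbhs [U [oU Ux mU0]].
  have [i [Bx BU]] := rational_ball_inside oU Ux.
  exists (pickle i) => //; rewrite /F pickleK.
  by case: pselect => // -[]; exists U.
apply/eqP; rewrite eq_le measure_ge0 andbT.
have mKC : measurable (~` msupport mu : set X).
  exact: measurableC measurable_msupport.
apply: le_trans (measure_sigma_subadditive _ mF mKC cover) _.
by rewrite eseries0.
Qed.

Lemma measure_msupport_sub (D : set X) :
  measurable D -> msupport mu `<=` D -> mu setT = mu D.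
Proof.
move=> mD KD; rewrite -(setUv D) measureU //; last 2 first.
- exact: measurableC.
- by rewrite setICr.
rewrite [X in (_ + X)%E](_ : _ = 0%E) ?adde0 //.
apply: (subset_measure0 (measurableC mD) (measurableC measurable_msupport)).
  by apply: subsetC.
exact: msupportC_null.
Qed.

End Support.

Lemma integral_const_conull (d : measure_display) (T : measurableType d)
    (R : realType) (mu : {measure set T -> \bar R}) (D K : set T)
    (h : T -> R) (c : R) :
  measurable D -> measurable K -> K `<=` D -> mu (D `\` K) = 0%E ->
  measurable_fun D h -> (forall x, K x -> h x = c) ->
  (\int[mu]_(x in D) (h x)%:E = c%:E * mu D)%E.
Proof.
move=> mD mK KD DK0 mh hK.
have mDK : measurable (D `\` K) by exact: measurableD.
have DE : D = K `|` (D `\` K) by rewrite setDUK.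
have muD : mu D = mu K.
  rewrite [in LHS]DE measureU ?setDIK //.
  by rewrite [X in (_ + X)%E]DK0 adde0.
rewrite muD [in LHS]DE integral_setU //; last 2 first.
- by rewrite -DE; apply/measurable_EFinP.
- by apply/disj_set2P; rewrite setDIK.
rewrite [X in (_ + X)%E]null_set_integral //; last first.
  by apply/measurable_EFinP; exact: measurable_funS mh.
rewrite adde0 (eq_integral (fun _ => c%:E)) ?integral_cst //.
by move=> x; rewrite inE => Kx; rewrite hK.
Qed.

Section IntegralOnSupport.
Variables (R : realType) (n : nat) (mu : {measure set (borelCn R n) -> \bar R}).
Local Notation X := (borelCn R n).

Lemma cintegral_const_on_msupport (D : set X) (h : 'rV[CC R]_n -> CC R)
    (c : CC R) :
  measurable D -> msupport mu `<=` D -> (mu D < +oo)%E ->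
  measurable_fun D (fun x => complex.Re (h x)) ->
  measurable_fun D (fun x => complex.Im (h x)) ->
  (forall x, msupport mu x -> h x = c) ->
  cintegral mu D h = c * (fine (mu D))%:C%C.
Proof.
move=> mD KD muDfin mRe mIm hK.
have DK0 : mu (D `\` msupport mu) = 0%E.
  apply: (subset_measure0 _ (measurableC (measurable_msupport mu))).
  - exact: measurableD mD (measurable_msupport mu).
  - by move=> x [].
  - exact: msupportC_null.
have const_part (p : CC R -> R) : measurable_fun D (fun x => p (h x)) ->
    (\int[mu]_(x in D) (p (h x))%:E = (p c)%:E * mu D)%E.
  move=> mp; apply: (integral_const_conull mD (measurable_msupport mu)) => //.
  by move=> x /hK ->.
have muDE : mu D = (fine (mu D))%:E.
  by rewrite fineK // ge0_fin_numE ?measure_ge0.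
rewrite /cintegral /Rintegral (const_part _ mRe) (const_part _ mIm) muDE.
rewrite -!EFinM /=.
by move: {hK const_part} c => [a b]; apply/eqP; rewrite eq_complex /=; simpc.
Qed.

End IntegralOnSupport.

Theorem mainTheorem2 (R : realType) (n : nat) (f : 'rV[CC R]_n -> CC R)
  (alpha : CC R) :
  (0 < n)%N -> in_polydisc_alg0 f -> alpha != 0 ->
  forall mu : {measure set (borelCn R n) -> \bar R},
    (mu setT < +oo)%E ->
    annihilates_A0 mu ->
    msupport mu `<=` [set z | torus R n z /\ f z = alpha] ->
    mu setT = 0%E.
Proof.
move=> _ fA0 alpha0 mu mufin muA0 Klevel.
have KT : msupport mu `<=` torus R n by move=> x /Klevel [].
have mT : measurable (torus R n : set (borelCn R n)) by exact: measurable_torus.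
have muT : mu setT = mu (torus R n) := measure_msupport_sub mT KT.
have muTfin : (mu (torus R n) < +oo)%E by rewrite -muT.
(* The integral of f against mu is alpha * mu(T^n), and also 0 as f is in
   A_0(D^n). *)
have := cintegral_const_on_msupport mT KT muTfin
  (A0_measurable_fun (@Re_continuous R) fA0)
  (A0_measurable_fun (@Im_continuous R) fA0) (fun x Kx => (Klevel x Kx).2).
rewrite muA0 // => /esym/eqP; rewrite mulf_eq0 (negbTE alpha0) /=.
move=> /eqP /(congr1 (@complex.Re R)) /= mT0.
by rewrite muT -[mu _]fineK ?mT0 // ge0_fin_numE ?measure_ge0.
Qed.
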